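(* Let $K\ge1$, $N\ge1$ and $\bm m=(m_1,\dots,m_N)\in[0,1]^N$, and let $\mu=\frac1N\sum_{n=1}^N m_n$ and $\bar{\bm m}=(\mu,\dots,\mu)\in[0,1]^N$. Then $D^*(\bm m)=D^*(\bar{\bm m})$, i.e. the optimal normalized download cost of PIR from databases with heterogeneous storage sizes $\bm m$ equals that of PIR from databases with homogeneous storage size $\mu$ each.
   Context: For a storage vector $\bm m\in[0,1]^N$, $D^*(\bm m)$ denotes the optimal normalized download cost of the following problem. There are $K$ independent messages $W_1,\dots,W_K$ of $L$ i.i.d. uniform bits each, and $N$ non-colluding databases; database $n$ stores $Z_n$ with $H(Z_n)\le m_nKL$, using uncoded placement: each $Z_n$ is a subset of the message bits, designed centrally; $W_{k,\mathcal S}$ denotes the bits of $W_k$ stored exactly at the databases in $\mathcal S\subseteq[N]$. A user wanting $W_\theta$ sends queries $Q_n^{[\theta]}$ independent of the messages; database $n$ answers $A_n^{[\theta]}$, a deterministic function of $Q_n^{[\theta]}$ and $Z_n$. Privacy: $(Q_n^{[\theta]},A_n^{[\theta]},W_{1:K})$ has the same distribution for every $\theta\in[K]$, for each $n$. Reliability: $H(W_\theta\mid Q_{1:N}^{[\theta]},A_{1:N}^{[\theta]})=o(L)$. The download cost is $D=\sum_n H(A_n^{[\theta]})$, and $D^*(\bm m)$ is the infimum of the limiting $D/L$ over all admissible placements and schemes (equal to $+\infty$ if none exists). Equivalently, $D^*(\bm m)$ is the optimal value of the linear program: minimize $\sum_{\emptyset\ne\mathcal S\subseteq[N]}\alpha_{\mathcal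 S}\big(1+\frac1{|\mathcal S|}+\dots+\frac1{|\mathcal S|^{K-1}}\big)$ over $\alpha_{\mathcal S}\ge0$ subject to $\sum_{\mathcal S\ne\emptyset}\alpha_{\mathcal S}=1$ and $\sum_{\mathcal S\ni n}\alpha_{\mathcal S}\le m_n$ for all $n\in[N]$. *)

From HB Require Import structures.
From mathcomp Require Import all_boot all_order all_algebra.
From mathcomp Require Import classical_sets reals constructive_ereal ereal.
Set Implicit Arguments. Unset Strict Implicit. Unset Printing Implicit Defensive.
Import Order.TTheory GRing.Theory Num.Theory.
Local Open Scope ring_scope.

Definition pir_weight (R : realType) (K : nat) (N : nat) (S : {set 'I_N}) : R :=
  \sum_(i < K) ((#|S|%:R : R)^-1) ^+ i.

(* Feasible allocations alpha_S, S ranging over nonempty subsets of [N]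
   (the value at set0 is irrelevant: it never appears). *)
Definition pir_feasible (R : realType) (N : nat) (m : 'I_N -> R)
    (alpha : {set 'I_N} -> R) : Prop :=
  [/\ forall S : {set 'I_N}, S != finset.set0 -> 0 <= alpha S,
      \sum_(S : {set 'I_N} | S != finset.set0) alpha S = 1 &
      forall n : 'I_N, \sum_(S : {set 'I_N} | (S != finset.set0) && (n \in S)) alpha S <= m n].

Definition pir_cost (R : realType) (K N : nat) (alpha : {set 'I_N} -> R) : R :=
  \sum_(S : {set 'I_N} | S != finset.set0) alpha S * pir_weight R K S.

(* D^*(m): optimal value of the LP, as an extended real (+oo if infeasible). *)
Definition Dstar (R : realType) (K N : nat) (m : 'I_N -> R) : \bar R :=
  ereal_inf [set (pir_cost K alpha)%:E | alpha in pir_feasible m]%classic.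

From HB Require Import structures.
From mathcomp Require Import all_boot all_order all_algebra.
From mathcomp Require Import classical_sets reals constructive_ereal ereal.
From mathcomp Require Import ring lra zify.
Set Implicit Arguments. Unset Strict Implicit. Unset Printing Implicit Defensive.
Import Order.TTheory GRing.Theory Num.Theory.
Local Open Scope ring_scope.

(* Write t for the total storage sum_n m_n and w(s) = sum_(i < K) s^-i.  The
   optimal cost depends on m only through t: it is +oo if t < 1, and otherwise
   it is the linear interpolation of w at t between floor(t) and floor(t) + 1.
   Lower bound: w is nonincreasing and convex on positive integers, so for
   every k >= 1 the chord of w through k and k + 1 lies below w at every
   positive integer.  A feasible alpha is a probability distribution on
   nonempty patterns of mean size at most t; since the chord is affine and
   nonincreasing, averaging gives cost >= chord(t).
   Upper bound: add the databases one at a time, keeping a distribution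
   supported on patterns of two consecutive sizes k, k + 1 whose loads are
   exactly the m_n.  A new database x is stored first on patterns of size k
   and then on patterns of size k + 1, until its load is m_x; the cost of the
   resulting distribution is the chord at t. *)

Section Chord.
Variable R : realFieldType.
Implicit Types (f : nat -> R) (k s : nat) (t u : R).

Definition chord f k t : R := f k * (k.+1%:R - t) + f k.+1 * (t - k%:R).

Lemma chordE f k t : chord f k t = f k - (f k - f k.+1) * (t - k%:R).
Proof. by rewrite /chord -addn1 natrD; ring. Qed.

Lemma chord_nonincr f k :
  f k.+1 <= f k -> {homo chord f k : t u / t <= u >-> u <= t}.
Proof.
by move=> fk t u tu; rewrite !chordE lerD2l lerN2 ler_wpM2l ?subr_ge0 ?lerD2r.
Qed.

Lemma sum_chord (I : finType) (P : pred I) (a x : I -> R) f k :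
  \sum_(i | P i) a i = 1 ->
  \sum_(i | P i) a i * chord f k (x i) = chord f k (\sum_(i | P i) a i * x i).
Proof.
move=> a1; rewrite chordE (eq_bigr (fun i => f k * a i + (f k - f k.+1) * k%:R * a i
  - (f k - f k.+1) * (a i * x i))); last by move=> i _; rewrite chordE; ring.
by rewrite sumrB big_split /= -!mulr_sumr a1; ring.
Qed.

Lemma chord_le_convex f k s :
  (forall j, (0 < j)%N -> f j.+1 - f j.+2 <= f j - f j.+1) ->
  (0 < k)%N -> (0 < s)%N -> chord f k s%:R <= f s.
Proof.
move=> cvx k0 s0; pose d j := f j - f j.+1.
have d_nonincr i j : (0 < i)%N -> (i <= j)%N -> d j <= d i.
  move=> i0; elim: j => [|j IH] ij; first lia.
  have [->|ij'] := eqVneq i j.+1; first exact: lexx.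
  by apply: le_trans (IH _); [apply: cvx|]; lia.
have tel a b : (a <= b)%N -> f a - f b = \sum_(a <= j < b) d j.
  move=> ab; rewrite -opprB -telescope_sumr // -sumrN.
  by apply: eq_bigr => j _; rewrite opprB.
rewrite chordE -/(d k); case: (leqP k s) => [ks|sk].
- have : \sum_(k <= j < s) d j <= \sum_(k <= j < s) d k.
    by apply: ler_sum_nat => j /andP[kj _]; apply: d_nonincr.
  by rewrite -tel // sumr_const_nat -[_ *+ _]mulr_natr natrB //; lra.
- have : \sum_(s <= j < k) d k <= \sum_(s <= j < k) d j.
    by apply: ler_sum_nat => j /andP[sj jk]; apply: d_nonincr; lia.
  rewrite -tel ?(ltnW sk) // sumr_const_nat -[_ *+ _]mulr_natr natrB ?(ltnW sk) //.
  by rewrite -opprB mulrN; lra.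
Qed.

End Chord.

Lemma chord_trunc (R : archiRealFieldType) (f : nat -> R) k t :
  k%:R <= t <= k.+1%:R -> chord f k t = chord f (Num.truncn t) t.
Proof.
case/andP=> kt tk; have [t_lt|t_ge] := ltP t k.+1%:R.
  by rewrite (@truncn_def _ _ k) ?kt.
have -> : t = k.+1%:R by apply/le_anti; rewrite tk.
by rewrite natrK !chordE subrr mulr0 subr0 -addn1 natrD addrAC subrr add0r mulr1 subKr.
Qed.

Lemma twice_le_add_of_sqr_le_mul (R : realDomainType) (x y z : R) :
  0 <= x -> 0 <= y -> 0 <= z -> z ^+ 2 <= x * y -> 2 * z <= x + y.
Proof.
move=> x0 y0 z0 zxy; rewrite -(ler_pXn2r (n := 2)) ?nnegrE ?mulr_ge0 ?addr_ge0 //.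
apply: le_trans (leif_AGM2_scaled x y).1.
by rewrite exprMn; lra.
Qed.

Section Weight.
Variables (R : realFieldType) (K : nat).

Definition weight (s : nat) : R := \sum_(i < K) (s%:R^-1) ^+ i.

Lemma weight_nonincr s : (0 < s)%N -> weight s.+1 <= weight s.
Proof.
move=> s0; apply: ler_sum => i _; apply: lerXn2r; rewrite ?nnegrE ?invr_ge0 ?ler0n //.
by rewrite lef_pV2 ?posrE ?ltr0n ?ler_nat.
Qed.

Lemma weight_convex s : (0 < s)%N ->
  weight s.+1 - weight s.+2 <= weight s - weight s.+1.
Proof.
move=> s0; suff : 2 * weight s.+1 <= weight s + weight s.+2 by lra.
(* Termwise AM-GM, from (s + 1)^-2 <= s^-1 (s + 2)^-1. *)
rewrite mulr_sumr -big_split; apply: ler_sum => i _ /=.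
have inv_ge0 n : 0 <= (n%:R : R)^-1 by rewrite invr_ge0 ler0n.
apply: twice_le_add_of_sqr_le_mul; rewrite ?exprn_ge0 // -exprMn -exprM mulnC exprM.
apply: lerXn2r; rewrite ?nnegrE ?exprn_ge0 ?mulr_ge0 //.
by rewrite exprVn -invfM -natrX -!natrM lef_pV2 ?posrE ?ltr0n ?ler_nat //; lia.
Qed.

End Weight.

Lemma divr_itv01 (R : realFieldType) (p q : R) : 0 <= p <= q -> 0 <= p / q <= 1.
Proof.
case/andP=> p0 pq; have [->|q_neq0] := eqVneq q 0; first by rewrite invr0 mulr0 lexx ler01.
have q_gt0 : 0 < q by rewrite lt_def q_neq0 (le_trans p0 pq).
by rewrite divr_ge0 ?(le_trans p0 pq) //= ler_pdivrMr // mul1r.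
Qed.

Lemma divrK_le (R : realFieldType) (p q : R) : 0 <= p <= q -> p / q * q = p.
Proof.
case/andP=> p0 pq; have [q0|q_neq0] := eqVneq q 0; last by rewrite divfK.
by rewrite q0 mulr0 in pq *; apply/eqP; rewrite eq_le p0 pq.
Qed.

Section Placement.
Variables (R : realFieldType) (T : finType).
Implicit Types (alpha : {set T} -> R) (m : T -> R) (theta : nat -> R) (S : {set T}).

Definition load alpha (n : T) : R := \sum_(S : {set T} | n \in S) alpha S.

Definition size_mass alpha (k : nat) : R := \sum_(S : {set T} | #|S| == k) alpha S.

Lemma sum_card_load alpha (P : pred {set T}) :
  \sum_(S | P S) alpha S * #|S|%:R = \sum_(n : T) \sum_(S | P S && (n \in S)) alpha S.
Proof.
under eq_bigr do rewrite -sum1_card natr_sum mulr_sumr.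
by rewrite (exchange_big_dep predT) //=; under eq_bigr do under eq_bigr do rewrite mulr1.
Qed.

Lemma size_mass0 alpha : size_mass alpha 0 = alpha finset.set0.
Proof.
by rewrite /size_mass (eq_bigl (pred1 finset.set0)) ?big_pred1_eq // => S; rewrite cards_eq0.
Qed.

Lemma sum_two_sizes alpha k (g : nat -> R) :
  (forall S, alpha S != 0 -> #|S| = k \/ #|S| = k.+1) ->
  \sum_S alpha S * g #|S| = g k * size_mass alpha k + g k.+1 * size_mass alpha k.+1.
Proof.
move=> supp; rewrite /size_mass !mulr_sumr !(big_mkcond (fun S => #|S| == _)) -big_split /=.
apply: eq_bigr => S _; have [->|/supp[]->] := eqVneq (alpha S) 0.
- by rewrite mul0r !mulr0 !if_same addr0.
- by rewrite eqxx ltn_eqF // mulrC addr0.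
- by rewrite eqxx gtn_eqF // mulrC add0r.
Qed.

Lemma loadE alpha n : load alpha n = \sum_S alpha S * (n \in S)%:R.
Proof.
by rewrite /load big_mkcond; apply: eq_bigr => S _; case: (n \in S); rewrite ?mulr1 ?mulr0.
Qed.

Lemma sum_sets_containing (x : T) (G : {set T} -> R) :
  \sum_(S : {set T} | x \in S) G S = \sum_(S : {set T} | x \notin S) G (x |: S).
Proof.
rewrite (reindex_onto (fun S => x |: S) (fun S => S :\ x)) /=; last first.
  by move=> S xS; rewrite finset.setD1K.
apply: eq_bigl => S; rewrite finset.setU11 /=.
have [xS|xS] := boolP (x \in S); last by rewrite finset.setU1K ?eqxx.
by apply/negbTE; apply: contraTneq xS => <-; rewrite finset.setD11.
Qed.

(* [x] is added to a [theta #|S|]-fraction of the mass of each pattern [S]. *)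
Definition extend_placement (x : T) theta alpha S : R :=
  if x \in S then theta #|S :\ x| * alpha (S :\ x) else (1 - theta #|S|) * alpha S.

Section Extension.
Variables (x : T) (theta : nat -> R) (alpha : {set T} -> R).
Hypothesis alpha_x : forall S, x \in S -> alpha S = 0.
Local Notation beta := (extend_placement x theta alpha).

Lemma sum_extend_placement (f : {set T} -> R) :
  \sum_S beta S * f S =
  \sum_S alpha S * (theta #|S| * f (x |: S) + (1 - theta #|S|) * f S).
Proof.
rewrite (bigID (fun S => x \in S)) [RHS](bigID (fun S => x \in S)) /=.
rewrite [X in _ = X + _]big1 ?add0r; last by move=> S /alpha_x->; rewrite mul0r.
rewrite sum_sets_containing -big_split /=; apply: eq_bigr => S xS.
by rewrite /extend_placement finset.setU11 (negbTE xS) finset.setU1K //; ring.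
Qed.

Lemma extend_placement_ge0 :
  (forall s, 0 <= theta s <= 1) -> (forall S, 0 <= alpha S) -> forall S, 0 <= beta S.
Proof.
move=> theta01 alpha_ge0 S.
have theta_ge0 s : 0 <= theta s /\ 0 <= 1 - theta s.
  by rewrite subr_ge0; apply/andP.
rewrite /extend_placement; case: ifP => _.
  by apply: mulr_ge0; [case: (theta_ge0 #|S :\ x|) | ].
by apply: mulr_ge0; [case: (theta_ge0 #|S|) | ].
Qed.

Lemma sum_extend_placement1 : \sum_S beta S = \sum_S alpha S.
Proof.
transitivity (\sum_S beta S * 1); first by under [RHS]eq_bigr do rewrite mulr1.
by rewrite sum_extend_placement; apply: eq_bigr => S _; ring.
Qed.

Lemma load_extend_placement n : n != x -> load beta n = load alpha n.
Proof.
move=> nx; rewrite !loadE sum_extend_placement; apply: eq_bigr => S _.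
by rewrite in_setU1 (negbTE nx); ring.
Qed.

Lemma load_extend_placement_at : load beta x = \sum_S alpha S * theta #|S|.
Proof.
rewrite loadE sum_extend_placement; apply: eq_bigr => S _.
have [/alpha_x->|xS] := boolP (x \in S); first by rewrite !mul0r.
by rewrite finset.setU11 mulr0 addr0 mulr1.
Qed.

Lemma extend_placement_neq0 S : beta S != 0 ->
  [/\ x \in S, alpha (S :\ x) != 0 & theta #|S :\ x| != 0] \/
  [/\ x \notin S, alpha S != 0 & theta #|S| != 1].
Proof.
rewrite /extend_placement; case: ifP => xS /eqP nz; [left | right].
  by split=> //; apply/eqP => h; apply: nz; rewrite h ?mulr0 ?mul0r.
by split; rewrite ?xS //; apply/eqP => h; apply: nz; rewrite h ?mulr0 ?subrr ?mul0r.
Qed.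

End Extension.

Definition balanced_placement m (U : {set T}) (k : nat) alpha :=
  [/\ forall S, 0 <= alpha S,
      \sum_S alpha S = 1,
      forall S, alpha S != 0 -> S \subset U,
      forall S, alpha S != 0 -> #|S| = k \/ #|S| = k.+1
    & forall n, n \in U -> load alpha n = m n].

Lemma balanced_size_mass m U k alpha : balanced_placement m U k alpha ->
  [/\ 0 <= size_mass alpha k, 0 <= size_mass alpha k.+1
    & size_mass alpha k + size_mass alpha k.+1 = 1].
Proof.
case=> alpha_ge0 alpha1 _ sizes _.
split; try by apply: sumr_ge0.
have := sum_two_sizes (fun _ => 1) sizes; rewrite !mul1r => <-.
by rewrite -[RHS]alpha1; apply: eq_bigr => S _; rewrite /= mulr1.
Qed.

Lemma balanced_mean_size m U k alpha : balanced_placement m U k alpha ->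
  \sum_S alpha S * #|S|%:R = \sum_(n in U) m n.
Proof.
case=> _ _ suppU _ loads; rewrite (sum_card_load _ predT) (bigID (mem U)) /=.
rewrite [X in _ + X]big1 ?addr0 => [|n nU]; first by apply: eq_bigr => n /loads.
apply: big1 => S nS; apply: contraNeq nU => /suppU /fintype.subsetP; exact.
Qed.

Section BalancedExtension.
Variables (m : T -> R) (U : {set T}) (k : nat) (alpha : {set T} -> R) (x : T).
Hypotheses (balanced : balanced_placement m (U :\ x) k alpha) (xU : x \in U).

Let alpha_x S : x \in S -> alpha S = 0.
Proof.
case: balanced => _ _ suppU _ _ xS; apply/eqP.
apply: contraTT xS => /suppU/fintype.subsetP sub.
by apply/negP => /sub; rewrite finset.setD11.
Qed.

Lemma balanced_extend theta k' :
  (forall s, 0 <= theta s <= 1) ->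
  \sum_S alpha S * theta #|S| = m x ->
  (forall S, extend_placement x theta alpha S != 0 -> #|S| = k' \/ #|S| = k'.+1) ->
  balanced_placement m U k' (extend_placement x theta alpha).
Proof.
move=> theta01 load_x sizes; case: balanced => alpha_ge0 alpha1 suppU _ loads.
split=> //.
- exact: extend_placement_ge0.
- by rewrite (sum_extend_placement1 theta alpha_x).
- move=> S /extend_placement_neq0[[xS /suppU sub _]|[_ /suppU sub _]].
    rewrite -(finset.setD1K xS) finset.subUset finset.sub1set xU.
    exact: fintype.subset_trans sub (finset.subD1set _ _).
  exact: fintype.subset_trans sub (finset.subD1set _ _).
- move=> n nU; have [->|nx] := eqVneq n x.
    by rewrite (load_extend_placement_at theta alpha_x).
  by rewrite (load_extend_placement theta alpha_x) // loads // in_setD1 nx.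
Qed.

Let card_extended S : x \in S -> #|S| = #|S :\ x|.+1.
Proof. by move=> xS; rewrite (cardsD1 x S) xS. Qed.

Lemma balanced_extend_low : 0 <= m x <= size_mass alpha k ->
  balanced_placement m U k
    (extend_placement x (fun s => if s == k then m x / size_mass alpha k else 0) alpha).
Proof.
move=> mx_le; have [_ _ _ sizes _] := balanced.
set theta := fun s => _; apply: balanced_extend => [s | | S].
- by rewrite /theta; case: eqP; rewrite ?lexx ?ler01 ?divr_itv01.
- by rewrite (sum_two_sizes theta sizes) /theta eqxx gtn_eqF // mul0r addr0 divrK_le.
- case/extend_placement_neq0 => [[xS _ theta_neq0] | [_ /sizes //]].
  right; rewrite card_extended //; congr _.+1; move: theta_neq0; rewrite /theta.
  by case: (eqVneq #|S :\ x| k) => [-> //|_]; rewrite eqxx.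
Qed.

Lemma balanced_extend_high : size_mass alpha k <= m x <= 1 ->
  balanced_placement m U k.+1
    (extend_placement x (fun s => if s == k then 1
       else (m x - size_mass alpha k) / size_mass alpha k.+1) alpha).
Proof.
move=> mx_ge; have [a_ge0 b_ge0 ab1] := balanced_size_mass balanced.
have [_ _ _ sizes _] := balanced.
have pa_b : 0 <= m x - size_mass alpha k <= size_mass alpha k.+1.
  by apply/andP; split; lra.
set theta := fun s => _; apply: balanced_extend => [s | | S].
- by rewrite /theta; case: eqP; rewrite ?lexx ?ler01 ?divr_itv01.
- by rewrite (sum_two_sizes theta sizes) /theta eqxx gtn_eqF // divrK_le //; ring.
- case/extend_placement_neq0 => [[xS /sizes size_Sx _] | [_ /sizes size_S]].
    by rewrite card_extended //; case: size_Sx => ->; [left | right].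
  by case: size_S => ->; [rewrite /theta eqxx eqxx | left].
Qed.

End BalancedExtension.

Lemma balanced_placement_exists m : (forall n, 0 <= m n <= 1) ->
  forall U, exists k alpha, balanced_placement m U k alpha.
Proof.
move=> m01 U; move: {2}#|U| (erefl #|U|) => c; elim: c U => [|c IH] U cardU.
  move/eqP: cardU; rewrite cards_eq0 => /eqP->.
  exists 0%N, (fun S => (S == finset.set0)%:R); split.
  - by move=> S; rewrite ler0n.
  - by rewrite (bigD1 finset.set0) //= eqxx big1 ?addr0 // => S /negbTE->.
  - by move=> S; case: (S =P finset.set0) => [-> _|_]; rewrite ?finset.sub0set ?eqxx.
  - by move=> S; case: (S =P finset.set0) => [-> _|_]; rewrite ?cards0 ?eqxx; left.
  - by move=> n; rewrite finset.in_set0.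
have [x xU] : exists x, x \in U by apply/set0Pn; rewrite -card_gt0 cardU.
have [|k [alpha balanced]] := IH (U :\ x).
  by move: cardU; rewrite (cardsD1 x U) xU => -[].
have [mx_ge0 mx_le1] := andP (m01 x).
have [mx_le | mx_ge] := lerP (m x) (size_mass alpha k).
  by exists k; eexists; apply: (balanced_extend_low balanced xU); rewrite mx_ge0.
by exists k.+1; eexists; apply: (balanced_extend_high balanced xU); rewrite mx_le1 ltW.
Qed.

End Placement.

Section DownloadCost.
Variables (R : realType) (K N : nat).
Implicit Types (m : 'I_N -> R) (alpha : {set 'I_N} -> R).
Local Notation w := (weight R K).

Lemma pir_feasible_mean_size m alpha : pir_feasible m alpha ->
  1 <= \sum_(S | S != finset.set0) alpha S * #|S|%:R <= \sum_n m n.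
Proof.
case=> alpha_ge0 alpha1 loads; apply/andP; split.
  rewrite -[X in X <= _]alpha1; apply: ler_sum => S S0.
  by rewrite -{1}[alpha S]mulr1 ler_wpM2l ?alpha_ge0 // ler1n card_gt0.
by rewrite sum_card_load; apply: ler_sum => n _; apply: loads.
Qed.

Lemma pir_cost_ge_chord m alpha k : pir_feasible m alpha -> (0 < k)%N ->
  chord w k (\sum_n m n) <= pir_cost K alpha.
Proof.
move=> feas k0; have [alpha_ge0 alpha1 _] := feas.
have /andP[_ mean_le] := pir_feasible_mean_size feas.
apply: le_trans (chord_nonincr (weight_nonincr R K k0) mean_le) _.
rewrite -sum_chord //; apply: ler_sum => S S0; apply: ler_wpM2l; first exact: alpha_ge0.
by apply: chord_le_convex => //; [exact: weight_convex | rewrite card_gt0].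
Qed.

Lemma pir_cost_attains_chord m : (forall n, 0 <= m n <= 1) -> 1 <= \sum_n m n ->
  exists2 alpha, pir_feasible m alpha &
    pir_cost K alpha = chord w (Num.truncn (\sum_n m n)) (\sum_n m n).
Proof.
move=> m01 t_ge1; have [k [alpha bal]] := balanced_placement_exists m01 [set: 'I_N].
have [a_ge0 b_ge0 ab1] := balanced_size_mass bal.
have mean : \sum_S alpha S * #|S|%:R = \sum_n m n.
  by rewrite (balanced_mean_size bal); apply: eq_bigl => n; rewrite finset.in_setT.
have [alpha_ge0 alpha1 _ sizes loads] := bal.
have t_eq : \sum_n m n = k%:R + size_mass alpha k.+1.
  rewrite -mean (sum_two_sizes _ sizes).
  by rewrite -natr1 mulrDl mul1r addrA -mulrDr ab1 mulr1.
(* Mass on the empty pattern would force k = 0 and hence t < 1. *)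
have alpha0 : alpha finset.set0 = 0.
  apply/eqP; apply: contraTT t_ge1 => alpha0_neq0.
  move: (sizes _ alpha0_neq0); rewrite cards0 => -[k0 | //].
  have : 0 < size_mass alpha 0 by rewrite size_mass0 lt_def alpha0_neq0 alpha_ge0.
  by move: ab1; rewrite -ltNge t_eq -k0 mulr0n add0r; lra.
have alpha_nonempty S : (if S != finset.set0 then alpha S else 0) = alpha S.
  by case: (S =P finset.set0) => // ->.
exists alpha.
  split=> [S _ | | n]; first exact: alpha_ge0.
    by rewrite big_mkcond /=; under eq_bigr do rewrite alpha_nonempty.
  rewrite big_mkcondl /=; under eq_bigr do rewrite alpha_nonempty.
  by rewrite -/(load alpha n) loads ?finset.in_setT.
rewrite -(@chord_trunc _ w k); last by rewrite t_eq -natr1; apply/andP; split; lra.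
rewrite /pir_cost big_mkcond (eq_bigr (fun S => alpha S * w #|S|)) => [|S _]; last first.
  by case: (S =P finset.set0) => [->|_] /=; rewrite ?alpha0 ?mul0r.
rewrite (sum_two_sizes w sizes) /chord t_eq -natr1.
by congr (_ * _ + _ * _); lra.
Qed.

Lemma Dstar_eq m : (forall n, 0 <= m n <= 1) ->
  Dstar K m = if \sum_n m n < 1 then +oo%E
              else (chord w (Num.truncn (\sum_n m n)) (\sum_n m n))%:E.
Proof.
move=> m01; case: ltP => [t_lt1 | t_ge1].
  apply/eqP; rewrite eq_le leey /=; apply/ereal_infP => _ [alpha feas <-].
  have /andP[mean_ge1 mean_le] := pir_feasible_mean_size feas.
  by move: t_lt1; rewrite ltNge (le_trans mean_ge1 mean_le).
apply/le_anti/andP; split.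
  have [alpha feas cost] := pir_cost_attains_chord m01 t_ge1.
  by apply: ereal_inf_lbound; exists alpha; rewrite // cost.
apply/ereal_infP => _ [alpha feas <-]; rewrite lee_fin.
by apply: pir_cost_ge_chord; rewrite // truncn_gt0.
Qed.

End DownloadCost.

Theorem theorem2 (R : realType) (K N : nat) (m : 'I_N -> R) :
  (1 <= K)%N -> (1 <= N)%N ->
  (forall n : 'I_N, 0 <= m n <= 1) ->
  Dstar K m = Dstar K (fun _ : 'I_N => (\sum_(n < N) m n) / N%:R).
Proof.
move=> _ N_gt0 m01; set t := \sum_(n < N) m n.
have N_neq0 : N%:R != 0 :> R by rewrite pnatr_eq0 -lt0n.
have mean01 (n : 'I_N) : 0 <= t / N%:R <= 1.
  rewrite divr_ge0 ?sumr_ge0 ?ler0n //=; last by move=> n' _; case/andP: (m01 n').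
  rewrite ler_pdivrMr ?ltr0n // mul1r -[N in N%:R]card_ord -sumr_const.
  by apply: ler_sum => n' _; case/andP: (m01 n').
have sum_mean : \sum_(n < N) t / N%:R = t.
  by rewrite sumr_const card_ord -[_ *+ N]mulr_natr divfK.
by rewrite (Dstar_eq K m01) (Dstar_eq K mean01) sum_mean.
Qed.
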